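(* Let $n \geq 8$ and let $P$ be an $n \times n$ partial Latin square on the symbols $\{1,\dots,n\}$ in which two rows and three columns are completely filled and every other cell (i.e. every cell lying neither in one of these two rows nor in one of these three columns) is empty. Suppose that the $2 \times 3$ subarray formed by the intersection of the two filled rows and the three filled columns is a Latin rectangle, i.e. it contains exactly three distinct symbols (so each of its two rows contains the same three symbols). Then $P$ is completable, i.e. there is an $n\times n$ Latin square $L$ with $L(i,j)=P(i,j)$ for every nonempty cell $(i,j)$ of $P$.
   Context: A partial Latin square of order $n$ is an $n\times n$ array in which each cell is empty or contains one symbol from $\{1,\dots,n\}$, and each symbol occurs at most once in each row and each column. A Latin square has no empty cells. A Latin rectangle of size $r\times s$ is an $r\times s$ array with no empty cells and entries from $\{1,\dots,\max\{r,s\}\}$ in which each symbol occurs at most once in each row and column. *)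

From mathcomp Require Import all_boot.
Set Implicit Arguments. Unset Strict Implicit. Unset Printing Implicit Defensive.

(* A partial array of order n: cell (i,j) is None (empty) or Some s,
   symbols are 'I_n, i.e. {0,...,n-1} standing for {1,...,n}. *)
Definition parray (n : nat) := 'I_n -> 'I_n -> option 'I_n.

Definition is_partial_latin n (P : parray n) : Prop :=
  (forall i j1 j2 s, P i j1 = Some s -> P i j2 = Some s -> j1 = j2) /\
  (forall i1 i2 j s, P i1 j = Some s -> P i2 j = Some s -> i1 = i2).

Definition is_latin_square n (L : 'I_n -> 'I_n -> 'I_n) : Prop :=
  is_partial_latin (fun i j => Some (L i j)).

Definition completes n (L : 'I_n -> 'I_n -> 'I_n) (P : parray n) : Prop :=
  forall i j s, P i j = Some s -> L i j = s.

Definition completable n (P : parray n) : Prop :=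
  exists L, is_latin_square L /\ completes L P.

From mathcomp Require Import all_boot zify.
Set Implicit Arguments. Unset Strict Implicit. Unset Printing Implicit Defensive.

(* Call the n - 2 unfilled rows and n - 3 unfilled columns free, the three symbols of the
   2 x 3 block block symbols, and the other n - 3 symbols outer. A free cell (i, j)
   may receive any symbol missing from row i in the filled columns and from column j in
   the filled rows, and the free cells must be filled injectively along lines.
   Outer symbols are placed first: outer symbol s in free column j is an edge of an
   (n - 5)-regular bipartite graph, to be coloured by one of the n - 5 free rows whose
   filled part lacks s. Galvin's theorem (bipartite graphs are edge-choosable from lists
   of size their maximum degree), proved from Hall's and König's theorems by the kernel
   method, gives such a colouring. Afterwards every free column has three holes and every
   free row as many holes as block symbols it misses, so the holes together with one edge
   per block symbol form a 3-regular bipartite multigraph, and a König 3-edge-colouring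
   distributes the block symbols. *)

(** * Hall's marriage theorem *)

Lemma injective_glue (A B : finType) (Y Z : {set A}) (N : {set B}) (g1 g2 : A -> B) :
  {in Y &, injective g1} -> {in Y, forall a, g1 a \in N} ->
  {in Z &, injective g2} -> {in Z, forall a, g2 a \notin N} ->
  {in Y :|: Z &, injective (fun a => if a \in Y then g1 a else g2 a)}.
Proof.
move=> inj1 N1 inj2 N2 a a' Xa Xa'.
have inZ x : x \in Y :|: Z -> x \notin Y -> x \in Z by rewrite inE => /orP[->|].
case: ifPn => Ya; case: ifPn => Ya'; first exact: inj1.
- by move=> eg; have := N2 a' (inZ a' Xa' Ya'); rewrite -eg N1.
- by move=> eg; have := N2 a (inZ a Xa Ya); rewrite eg N1.
- by apply: inj2; apply: inZ.
Qed.

Section Hall.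
Variables (A B : finType).
Implicit Types (R : A -> B -> bool) (X Y Z : {set A}) (N : {set B}).

Definition nbh R X : {set B} := [set b | [exists a in X, R a b]].

Definition avoiding R N a b := R a b && (b \notin N).

Definition hall_condition R X := forall Y, Y \subset X -> #|Y| <= #|nbh R Y|.

Definition matching_on R X (g : A -> B) :=
  {in X &, injective g} /\ {in X, forall a, R a (g a)}.

Lemma nbhU R Y Z : nbh R (Y :|: Z) = nbh R Y :|: nbh R Z.
Proof.
apply/setP=> b; rewrite !inE; apply/existsP/orP.
- by case=> a /andP[/setUP[] Ya Rab]; [left|right]; apply/existsP; exists a; rewrite Ya.
- by case=> /existsP[a /andP[Ya Rab]]; exists a; rewrite inE Ya ?orbT.
Qed.

Lemma nbh_avoiding R N Y : nbh (avoiding R N) Y = nbh R Y :\: N.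
Proof.
apply/setP=> b; rewrite !inE; apply/existsP/andP.
- by case=> a /and3P[Ya Rab Nb]; split=> //; apply/existsP; exists a; rewrite Ya.
- by case=> Nb /existsP[a /andP[Ya Rab]]; exists a; rewrite Ya /avoiding Rab.
Qed.

Lemma hall_conditionS R X Y : Y \subset X -> hall_condition R X -> hall_condition R Y.
Proof. by move=> sYX hallX Z sZY; apply: hallX (subset_trans sZY sYX). Qed.

Lemma hall_condition_tight R X Y :
  hall_condition R X -> Y \subset X -> #|nbh R Y| <= #|Y| ->
  hall_condition (avoiding R (nbh R Y)) (X :\: Y).
Proof.
move=> hallX sYX tightY Z sZ; rewrite nbh_avoiding.
have /andP[sZX disjZY] : (Z \subset X) && [disjoint Z & Y] by rewrite -subsetD.
have := hallX (Z :|: Y); rewrite subUset sYX sZX nbhU.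
rewrite (cardsU Z Y) (disjoint_setI0 disjZY) cards0 cardsU => /(_ isT).
have := cardsID (nbh R Y) (nbh R Z); rewrite setIC.
have := subset_leq_card (subsetIl (nbh R Y) (nbh R Z)); lia.
Qed.

Lemma hall_condition_surplus R X a0 b :
  (forall Y, Y \proper X -> Y != set0 -> #|Y| < #|nbh R Y|) -> a0 \in X ->
  hall_condition (avoiding R [set b]) (X :\ a0).
Proof.
move=> surplus Xa0 Z sZ; rewrite nbh_avoiding.
have [->|nzZ] := eqVneq Z set0; first by rewrite cards0.
have ltZX : Z \proper X.
  rewrite properE (subset_trans sZ (subsetDl _ _)); apply/subsetPn; exists a0 => //.
  by apply/negP=> /(subsetP sZ); rewrite !inE eqxx.
have := surplus Z ltZX nzZ; have := cardsD1 b (nbh R Z); rewrite setDE; lia.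
Qed.

Lemma matching_glue R N Y Z g1 g2 :
  matching_on R Y g1 -> {in Y, forall a, g1 a \in N} ->
  matching_on (avoiding R N) Z g2 ->
  matching_on R (Y :|: Z) (fun a => if a \in Y then g1 a else g2 a).
Proof.
move=> [inj1 R1] N1 [inj2 R2]; have g2N a : a \in Z -> g2 a \notin N by move/R2/andP=> [].
split=> [|a Xa]; first exact: (injective_glue inj1 N1 inj2 g2N).
case: ifPn => Ya; first exact: R1.
by move: Xa; rewrite inE (negbTE Ya) => /R2/andP[].
Qed.

Theorem Hall_marriage (b0 : B) R X : hall_condition R X -> exists g, matching_on R X g.
Proof.
elim: {X}_.+1 {-2}X (ltnSn #|X|) R => // k IH X ltXk R hallX.
have [->|[a0 Xa0]] := set_0Vmem X; first by exists (fun=> b0); split=> a; rewrite inE.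
have [/existsP[Y /and3P[ltYX nzY tightY]]|surplus] :=
  boolP [exists Y : {set A}, [&& Y \proper X, Y != set0 & #|nbh R Y| <= #|Y|]].
- have sYX := proper_sub ltYX.
  have [g1 m1] := IH Y (leq_trans (proper_card ltYX) ltXk) R (hall_conditionS sYX hallX).
  have [|g2 m2] := IH (X :\: Y) _ _ (hall_condition_tight hallX sYX tightY).
    have := cardsID Y X; rewrite (setIidPr sYX); have := card_gt0 Y; rewrite nzY.
    by move: ltXk; lia.
  exists (fun a => if a \in Y then g1 a else g2 a).
  have g1N a : a \in Y -> g1 a \in nbh R Y.
    by move=> Ya; rewrite inE; apply/exists_inP; exists a; last exact: m1.2.
  by rewrite -{1}(setID X Y) (setIidPr sYX); apply: matching_glue m1 g1N m2.
- have {}surplus Y : Y \proper X -> Y != set0 -> #|Y| < #|nbh R Y|.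
    move=> ltYX nzY; rewrite ltnNge; apply: contra surplus => tightY.
    by apply/existsP; exists Y; apply/and3P.
  have [b] : exists b, b \in nbh R [set a0].
    by apply/set0Pn; rewrite -card_gt0 (leq_trans _ (hallX _ _)) ?cards1 ?sub1set.
  rewrite inE => /exists_inP[_ /set1P-> Ra0b].
  have [|g m] := IH (X :\ a0) _ _ (hall_condition_surplus b surplus Xa0).
    by have := cardsD1 a0 X; rewrite Xa0; move: ltXk; lia.
  exists (fun a => if a \in [set a0] then b else g a).
  rewrite -{1}(setD1K Xa0); apply: matching_glue _ (fun a _ => set11 b) m.
  by split=> [x y|x]; rewrite !inE => /eqP-> // /eqP->.
Qed.
End Hall.

(** * König's edge-colouring theorem *)

Section EdgeColouring.
Variables (E A B : finType) (u : E -> A) (v : E -> B).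
Implicit Types (S M : {set E}) (XA : {set A}) (XB : {set B}).

Definition adjacent e e' := (e != e') && ((u e == u e') || (v e == v e')).

Definition proper_colouring (K : eqType) S (c : E -> K) :=
  {in S &, forall e e', adjacent e e' -> c e != c e'}.

Definition degree (T : finType) (w : E -> T) S x := #|[set e in S | w e == x]|.

Lemma proper_colouringS (K : eqType) S S' (c : E -> K) :
  S' \subset S -> proper_colouring S c -> proper_colouring S' c.
Proof. by move=> sS'S proper_S e e' /(subsetP sS'S) Se /(subsetP sS'S); apply: proper_S. Qed.

Lemma proper_colouring_clique_inj (K : eqType) S (X : {set E}) (c : E -> K) :
  X \subset S -> {in X &, forall x y, x != y -> adjacent x y} ->
  proper_colouring S c -> {in X &, injective c}.
Proof.
move=> sXS clique proper_S x y Xx Xy; apply: contra_eq => ne.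
by apply: proper_S; rewrite ?(subsetP sXS) ?clique.
Qed.

Definition regular S XA XB d :=
  [/\ {in S, forall e, (u e \in XA) && (v e \in XB)},
      {in XA, forall a, degree u S a = d} & {in XB, forall b, degree v S b = d}].

Definition incident S a b := [exists e in S, (u e == a) && (v e == b)].

Lemma card_degree_const (T : finType) (w : E -> T) S (X : {set T}) d :
  {in S, forall e, w e \in X} -> {in X, forall x, degree w S x = d} -> #|S| = #|X| * d.
Proof.
move=> wS dX; rewrite -sum1_card (partition_big w (mem X)) //= -sum_nat_const.
by apply: eq_bigr => x Xx; rewrite sum1_card -(dX x Xx); apply: eq_card => e; rewrite !inE.
Qed.

Lemma degreeD (T : finType) (w : E -> T) S M x :
  M \subset S -> degree w (S :\: M) x = degree w S x - degree w M x.
Proof.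
move=> sMS; rewrite /degree -cardsDS; last first.
  by apply/subsetP=> e; rewrite !inE => /andP[/(subsetP sMS)->].
apply: eq_card => e; rewrite !inE.
by case: (boolP (e \in M)) => [/(subsetP sMS)->|]; case: (w e == x).
Qed.

Lemma degree_eq1 (T : finType) (w : E -> T) M x e :
  e \in M -> w e = x -> {in M, forall e', w e' = x -> e' = e} -> degree w M x = 1.
Proof.
move=> Me we uniq_e; rewrite /degree -(cards1 e); apply: eq_card => e'.
rewrite !inE; apply/andP/eqP=> [[Me' /eqP]|->]; [exact: uniq_e|by rewrite Me we].
Qed.

Lemma degree1_inj (T : finType) (w : E -> T) M e e' :
  degree w M (w e) = 1 -> e \in M -> e' \in M -> w e' = w e -> e' = e.
Proof.
move=> /eqP/cards1P[e0 eq_e0] Me Me' we'.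
have: e \in [set e0] by rewrite -eq_e0 !inE Me eqxx.
have: e' \in [set e0] by rewrite -eq_e0 !inE Me' we' eqxx.
by rewrite !inE => /eqP-> /eqP->.
Qed.

Lemma regular0 S XA XB : regular S XA XB 0 -> S = set0.
Proof.
case=> ends degA _; apply/setP=> e; rewrite inE; apply/negP=> Se.
have /andP[XAu _] := ends e Se; have /eqP := degA _ XAu.
by rewrite cards_eq0 => /eqP/setP/(_ e); rewrite !inE Se eqxx.
Qed.

Lemma regular_hall_condition S XA XB d :
  regular S XA XB d.+1 -> hall_condition (incident S) XA.
Proof.
case=> ends degA degB Y sYXA.
have sNXB : nbh (incident S) Y \subset XB.
  apply/subsetP=> b; rewrite inE => /exists_inP[a _ /exists_inP[e Se /andP[_ /eqP<-]]].
  by case/andP: (ends e Se).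
pose SY := [set e in S | u e \in Y]; pose SN := [set e in S | v e \in nbh (incident S) Y].
have cardSY : #|SY| = #|Y| * d.+1.
  apply: (card_degree_const (w := u)) => [e|a Ya]; first by rewrite inE => /andP[].
  rewrite -(degA a (subsetP sYXA a Ya)) /degree; apply: eq_card => e; rewrite !inE.
  by case: (u e =P a) => [->|_]; rewrite ?Ya ?andbF ?andbT.
have cardSN : #|SN| = #|nbh (incident S) Y| * d.+1.
  apply: (card_degree_const (w := v)) => [e|b Nb]; first by rewrite inE => /andP[].
  rewrite -(degB b (subsetP sNXB b Nb)) /degree; apply: eq_card => e; rewrite !inE.
  by case: (v e =P b) => [->|_]; rewrite ?andbF // andbT; move: Nb; rewrite inE => ->.
rewrite -(leq_pmul2r (ltn0Sn d)) -cardSY -cardSN; apply: subset_leq_card; apply/subsetP=> e.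
rewrite !inE => /andP[Se Ye]; rewrite Se; apply/exists_inP; exists (u e) => //.
by apply/exists_inP; exists e; rewrite ?eqxx.
Qed.

Lemma matching_of_bijection S XA XB (g : A -> B) :
  {in XA &, injective g} -> {in XA, forall a, incident S a (g a)} -> g @: XA = XB ->
  exists2 M : {set E}, M \subset S & regular M XA XB 1.
Proof.
move=> inj_g inc_g img.
pose chosen a := [pick e in S | (u e == a) && (v e == g a)].
have chosenP a : a \in XA -> exists e, [/\ chosen a = Some e, e \in S, u e = a & v e = g a].
  move=> XAa; rewrite /chosen; case: pickP => [e /and3P[Se /eqP ue /eqP ve]|none].
    by exists e.
  by case/exists_inP: (inc_g a XAa) => e Se uve; move: (none e); rewrite Se uve.
pose M := [set e | (u e \in XA) && (chosen (u e) == Some e)].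
have inM e : e \in M -> [/\ e \in S, u e \in XA & v e = g (u e)].
  rewrite inE => /andP[XAu /eqP ch]; have [e' [ch' Se' ue' ve']] := chosenP _ XAu.
  by move: ch; rewrite ch' => -[<-]; rewrite ue'.
exists M.
  by apply/subsetP=> e /inM[].
split=> [e /inM[_ XAu ->]|a XAa|b]; first by rewrite XAu -img imset_f.
  have [e [ch Se ue _]] := chosenP a XAa.
  apply: (degree_eq1 (e := e)) => //; first by rewrite /M inE ue XAa ch eqxx.
  by move=> e'; rewrite inE => /andP[_ +] ue'; rewrite ue' ch => /eqP[->].
rewrite -img => /imsetP[a XAa ->].
have [e [ch Se ue ve]] := chosenP a XAa.
apply: (degree_eq1 (e := e)) => //; first by rewrite /M inE ue XAa ch eqxx.
move=> e' Me' ve'.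
have [_ XAu' ve'u] := inM e' Me'.
have ua : u e' = a by apply: inj_g; rewrite // -ve'u.
by move: Me'; rewrite inE ua ch => /andP[_ /eqP[]].
Qed.

Lemma regular_perfect_matching (b0 : B) S XA XB d :
  regular S XA XB d.+1 -> exists2 M : {set E}, M \subset S & regular M XA XB 1.
Proof.
move=> reg; have [g [inj_g inc_g]] := Hall_marriage b0 (regular_hall_condition reg).
case: reg => ends degA degB.
have gXB a : a \in XA -> g a \in XB.
  by move/inc_g/exists_inP=> [e Se /andP[_ /eqP<-]]; case/andP: (ends e Se).
apply: (matching_of_bijection inj_g inc_g); apply/eqP; rewrite eqEcard.
have cardXA : #|S| = #|XA| * d.+1 by apply: (card_degree_const (w := u)) => // e /ends/andP[].
have cardXB : #|S| = #|XB| * d.+1 by apply: (card_degree_const (w := v)) => // e /ends/andP[].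
have -> : #|XB| = #|XA| by apply/eqP; rewrite -(eqn_pmul2r (ltn0Sn d)) -cardXA -cardXB.
rewrite (card_in_imset inj_g) leqnn andbT.
by apply/subsetP=> _ /imsetP[a XAa ->]; apply: gXB.
Qed.

Lemma regular_setD_matching S M XA XB d :
  regular S XA XB d.+1 -> M \subset S -> regular M XA XB 1 -> regular (S :\: M) XA XB d.
Proof.
case=> ends degA degB sMS [_ degMA degMB]; split=> [e /setDP[Se _]|a XAa|b XBb].
- exact: ends Se.
- by rewrite degreeD // degA // degMA // subn1.
- by rewrite degreeD // degB // degMB // subn1.
Qed.

Lemma regular1_independent M XA XB :
  regular M XA XB 1 -> {in M &, forall e e', ~~ adjacent e e'}.
Proof.
case=> ends degA degB e e' Me Me'; apply/negP=> /andP[/eqP ne shared]; apply: ne.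
have /andP[XAu XBv] := ends e' Me'.
case/orP: shared => /eqP; first exact: degree1_inj (degA _ XAu) Me' Me.
exact: degree1_inj (degB _ XBv) Me' Me.
Qed.

Theorem Konig_edge_colouring (b0 : B) S XA XB d :
  regular S XA XB d -> exists c : E -> nat, {in S, forall e, c e < d} /\ proper_colouring S c.
Proof.
elim: d S => [|d IH] S reg.
  by exists (fun=> 0); rewrite (regular0 reg); split=> e; rewrite inE.
have [M sMS regM] := regular_perfect_matching b0 reg.
have [c [c_lt c_proper]] := IH _ (regular_setD_matching reg sMS regM).
exists (fun e => if e \in M then d else c e); split=> [e Se|e e' Se Se' adj].
  by case: ifP => Me //; apply/leqW/c_lt; rewrite inE Me.
have c_ltd f : f \in S -> f \notin M -> c f < d by move=> Sf Mf; apply: c_lt; rewrite inE Mf.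
case: ifPn => Me; case: ifPn => Me'.
- by have := regular1_independent regM Me Me'; rewrite adj.
- by rewrite eq_sym neq_ltn c_ltd.
- by rewrite neq_ltn c_ltd.
- by apply: c_proper; rewrite // inE ?Me ?Me'.
Qed.

(** * Galvin's list edge-colouring theorem *)

Lemma card_in_inj_range (T : finType) (f : T -> nat) (X : {set T}) lo hi :
  {in X &, injective f} -> {in X, forall x, lo <= f x < hi} -> #|X| <= hi - lo.
Proof.
move=> inj_f range_f; have := @uniq_leq_size _ (map f (enum X)) (iota lo (hi - lo)).
rewrite size_map size_iota -cardE; apply.
  by rewrite map_inj_in_uniq ?enum_uniq // => x y; rewrite !mem_enum; apply: inj_f.
by move=> y /mapP[x]; rewrite mem_enum => /range_f rx ->; rewrite mem_iota; move: rx; lia.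
Qed.

Section Kernels.
Variable rank : E -> nat.
Implicit Types (T : {set E}).

(* Galvin's orientation of the line graph induced by the proper colouring [rank]. *)
Definition dominates e' e := (e' != e) &&
  (((u e' == u e) && (rank e < rank e')) || ((v e' == v e) && (rank e' < rank e))).

Definition dominators T e := [set e' in T | dominates e' e].

Definition kernel T M := [/\ M \subset T, {in M &, forall e e', ~~ adjacent e e'} &
  {in T :\: M, forall e, exists2 e', e' \in M & dominates e' e}].

Definition top_at T e := [forall e' in T, (u e' == u e) ==> (rank e' <= rank e)].

Lemma kernel_tops T :
  proper_colouring T rank ->
  {in [set e in T | top_at T e] &, forall e e', v e = v e' -> e = e'} ->
  kernel T [set e in T | top_at T e].
Proof.
move=> proper_T top_v; split=> [|e e' tope tope'|e].
- by apply/subsetP=> e /[!inE] /andP[].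
- apply/negP=> /[dup] adj /andP[ne /orP[/eqP ue|/eqP ve]]; last by case/eqP: ne; apply: top_v.
  move: tope tope'; rewrite !inE => /andP[Te /forall_inP tope] /andP[Te' /forall_inP tope'].
  have /implyP le_e'e := tope e' Te'; have /implyP le_ee' := tope' e Te.
  have := proper_T e e' Te Te' adj.
  by rewrite eqn_leq le_e'e ?le_ee' ?ue ?eqxx.
move=> /setDP[Te]; rewrite inE Te /= => /forall_inPn[e' Te'].
rewrite negb_imply -ltnNge => /andP[ue' lt_e'].
case: (@arg_maxnP _ e [pred t | (t \in T) && (u t == u e)] rank); first by rewrite /= Te eqxx.
move=> t /andP[Tt /eqP ut] t_max.
have lt_et : rank e < rank t by rewrite (leq_trans lt_e' (t_max e' _)) //= Te' ue'.
exists t.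
  rewrite !inE Tt; apply/forall_inP=> x Tx; apply/implyP=> /eqP ux.
  by apply: t_max; rewrite /= Tx ux ut eqxx.
have ne_te : t != e by apply: contraTneq lt_et => ->; rewrite ltnn.
by rewrite /dominates ne_te ut eqxx lt_et.
Qed.

(* [e1] is dominated by [e2] or, as [e2] is top at its [A]-end, by the kernel edge that
   dominates [e2] at their common [B]-end. *)
Lemma kernel_setD1 T M e1 e2 :
  e2 \in T -> e1 != e2 -> v e1 = v e2 -> rank e2 < rank e1 -> top_at T e2 ->
  kernel (T :\ e1) M -> kernel T M.
Proof.
move=> Te2 ne12 v12 lt21 /forall_inP top2 [sM indepM domM].
split=> [|//|e /setDP[Te Me]]; first exact: subset_trans sM (subsetDl _ _).
have [->|ne1] := eqVneq e e1; last first.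
  by apply: domM; rewrite !inE ne1 Te Me.
have [Me2|Me2] := boolP (e2 \in M).
  by exists e2; rewrite // /dominates eq_sym ne12 v12 eqxx lt21 orbT.
have [e' Me' dom2] : exists2 e', e' \in M & dominates e' e2.
  by apply: domM; rewrite !inE eq_sym ne12 Te2 Me2.
have /setD1P[ne'1 Te'] := subsetP sM e' Me'.
case/andP: dom2 => _ /orP[/andP[/eqP ue' lt2']|/andP[/eqP ve' lt'2]].
  by have /implyP := top2 e' Te'; rewrite ue' eqxx leqNgt lt2' => /(_ isT).
by exists e'; rewrite // /dominates ne'1 ve' v12 eqxx (ltn_trans lt'2 lt21) orbT.
Qed.

Lemma kernel_exists T : proper_colouring T rank -> exists M, kernel T M.
Proof.
elim: {T}_.+1 {-2}T (ltnSn #|T|) => // k IH T ltTk proper_T.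
pose tops := [set e in T | top_at T e].
have [/existsP[e1 /existsP[e2 /and4P[tops1 tops2 ne12 /eqP v12]]]|] :=
  boolP [exists e1, exists e2, [&& e1 \in tops, e2 \in tops, e1 != e2 & v e1 == v e2]].
- have tops_T e : e \in tops -> e \in T by rewrite inE => /andP[].
  wlog lt21 : e1 e2 tops1 tops2 ne12 v12 / rank e2 < rank e1.
    move=> gen; have adj : adjacent e1 e2 by rewrite /adjacent ne12 v12 eqxx orbT.
    have := proper_T e1 e2 (tops_T e1 tops1) (tops_T e2 tops2) adj.
    rewrite neq_ltn => /orP[lt12|lt21]; first by apply: (gen e2 e1); rewrite // eq_sym.
    exact: (gen e1 e2).
  have [|M kerM] := IH (T :\ e1) _ (proper_colouringS (subsetDl T [set e1]) proper_T).
    by have := cardsD1 e1 T; rewrite tops_T //; move: ltTk; lia.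
  exists M; apply: (kernel_setD1 (tops_T e2 tops2) ne12 v12 lt21 _ kerM).
  by move: tops2; rewrite inE => /andP[].
- move=> no_pair; exists tops; apply: kernel_tops => // e e' tope tope' ve.
  apply/eqP; apply: contraNT no_pair => ne.
  by apply/existsP; exists e; apply/existsP; exists e'; rewrite tope tope' ne ve eqxx.
Qed.

Lemma card_dominators_lt S D e :
  proper_colouring S rank -> {in S, forall e, rank e < D} -> e \in S -> #|dominators S e| < D.
Proof.
move=> proper_S rank_lt Se.
pose above := [set e' in S | (u e' == u e) && (rank e < rank e')].
pose below := [set e' in S | (v e' == v e) && (rank e' < rank e)].
have sub : dominators S e \subset above :|: below.
  by apply/subsetP=> x; rewrite !inE => /andP[-> /andP[_ /orP[]/andP[-> ->]]]; rewrite ?orbT.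
have clique_above : {in above &, forall x y, x != y -> adjacent x y}.
  move=> x y; rewrite !inE => /andP[_ /andP[/eqP ux _]] /andP[_ /andP[/eqP uy _]] ne.
  by rewrite /adjacent ne ux uy eqxx.
have clique_below : {in below &, forall x y, x != y -> adjacent x y}.
  move=> x y; rewrite !inE => /andP[_ /andP[/eqP vx _]] /andP[_ /andP[/eqP vy _]] ne.
  by rewrite /adjacent ne vx vy eqxx orbT.
have sub_above : above \subset S by apply/subsetP=> x; rewrite inE => /andP[].
have sub_below : below \subset S by apply/subsetP=> x; rewrite inE => /andP[].
have card_above : #|above| <= D - (rank e).+1.
  apply: card_in_inj_range (proper_colouring_clique_inj sub_above clique_above proper_S) _.
  by move=> x; rewrite inE => /andP[Sx /andP[_ ->]]; rewrite rank_lt.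
have card_below : #|below| <= rank e - 0.
  apply: card_in_inj_range (proper_colouring_clique_inj sub_below clique_below proper_S) _.
  by move=> x; rewrite inE => /andP[_ /andP[_ ->]].
have := subset_leq_card sub; rewrite cardsU; have := rank_lt e Se.
by move: card_above card_below; lia.
Qed.

Lemma card_dominators_setD_kernel (K : finType) S (L : E -> {set K}) k M e :
  kernel [set e' in S | k \in L e'] M -> e \in S :\: M ->
  #|dominators S e| < #|L e| -> #|dominators (S :\: M) e| < #|L e :\ k|.
Proof.
move=> [sM _ domM] /setDP[Se Me] lt_dom.
have sub : dominators (S :\: M) e \subset dominators S e.
  by apply/subsetP=> x; rewrite !inE => /andP[/andP[_ ->] ->].
have [Lk|Lk] := boolP (k \in L e); last first.
  have -> : L e :\ k = L e by apply/setDidPl; rewrite disjoint_sym disjoints1.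
  exact: leq_ltn_trans (subset_leq_card sub) lt_dom.
have [e' Me' dom_e'] : exists2 e', e' \in M & dominates e' e by apply: domM; rewrite !inE Se Lk Me.
have /setIdP[Se' _] := subsetP sM e' Me'.
have sub' : dominators (S :\: M) e \subset dominators S e :\ e'.
  apply/subsetP=> x; rewrite !inE => /andP[/andP[Mx Sx] dx]; rewrite Sx dx !andbT.
  by apply: contraNneq Mx => ->.
have De' : e' \in dominators S e by rewrite inE Se' dom_e'.
apply: leq_ltn_trans (subset_leq_card sub') _.
by move: lt_dom; rewrite (cardsD1 e') De' (cardsD1 k (L e)) Lk ltn_add2l.
Qed.

(* Colour by [k] a kernel of the edges whose list contains [k] and recurse: such an edge
   outside the kernel loses [k] from its list but also a dominator. *)
Lemma kernel_list_colouring (K : finType) (k0 : K) S (L : E -> {set K}) :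
  proper_colouring S rank -> {in S, forall e, #|dominators S e| < #|L e|} ->
  exists c : E -> K, {in S, forall e, c e \in L e} /\ proper_colouring S c.
Proof.
elim: {S}_.+1 {-2}S (ltnSn #|S|) L => // m IH S ltSm L proper_S lt_dom.
have [->|[e0 Se0]] := set_0Vmem S; first by exists (fun=> k0); split=> e; rewrite inE.
have [k Lk] : exists k, k \in L e0.
  by apply/set0Pn; rewrite -card_gt0; apply: leq_ltn_trans (leq0n _) (lt_dom e0 Se0).
pose Sk := [set e in S | k \in L e].
have sSkS : Sk \subset S by apply/subsetP=> e; rewrite inE => /andP[].
have [M kerM] := kernel_exists (proper_colouringS sSkS proper_S).
have [sM indepM domM] := kerM.
have sMS : M \subset S := subset_trans sM sSkS.
have nzM : M != set0.
  have [Me0|Me0] := boolP (e0 \in M); first by apply/set0Pn; exists e0.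
  have [|e' Me' _] := domM e0; first by rewrite !inE Se0 Lk Me0.
  by apply/set0Pn; exists e'.
have ltSMm : #|S :\: M| < m.
  have := cardsID M S; rewrite (setIidPr sMS); have := card_gt0 M; rewrite nzM.
  by move: ltSm; lia.
have lt_domD e : e \in S :\: M -> #|dominators (S :\: M) e| < #|L e :\ k|.
  move=> SMe; have /setDP[Se _] := SMe.
  exact: card_dominators_setD_kernel kerM SMe (lt_dom e Se).
have [c [cL c_proper]] :=
  IH _ ltSMm (fun e => L e :\ k) (proper_colouringS (subsetDl _ _) proper_S) lt_domD.
have cM e : e \in S -> e \notin M -> c e \in L e /\ c e != k.
  by move=> Se Me; have := cL e; rewrite !inE Se Me => /(_ isT) /andP[].
exists (fun e => if e \in M then k else c e); split=> [e Se|e e' Se Se' adj].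
  case: ifPn => Me; last by case: (cM e Se Me).
  by have := subsetP sM e Me; rewrite inE => /andP[].
case: ifPn => Me; case: ifPn => Me'.
- by have := indepM e e' Me Me'; rewrite adj.
- by case: (cM e' Se' Me') => _; rewrite eq_sym.
- by case: (cM e Se Me).
- by apply: c_proper; rewrite // inE ?Me ?Me'.
Qed.

End Kernels.

Theorem Galvin_list_edge_colouring (b0 : B) (K : finType) (k0 : K) S XA XB d
    (L : E -> {set K}) :
  regular S XA XB d -> {in S, forall e, d <= #|L e|} ->
  exists c : E -> K, {in S, forall e, c e \in L e} /\ proper_colouring S c.
Proof.
move=> reg bigL; have [rank [rank_lt proper_rank]] := Konig_edge_colouring b0 reg.
apply: (kernel_list_colouring k0 proper_rank) => e Se.
exact: leq_trans (card_dominators_lt proper_rank rank_lt Se) (bigL e Se).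
Qed.

End EdgeColouring.

(** * Completing the partial Latin square *)

Lemma card_rows_containing (T : finType) (f : T -> T -> T) (X : {set T}) s :
  (forall j, j \in X -> injective (f^~ j)) -> (forall i, {in X &, injective (f i)}) ->
  #|[set i | s \in [set f i j | j in X]]| = #|X|.
Proof.
move=> inj_col inj_row; pose row_of j := odflt s [pick i | f i j == s].
have row_ofP j : j \in X -> f (row_of j) j = s.
  move=> Xj; rewrite /row_of; case: pickP => [i /eqP //|none].
  have /codomP[i si] := inj_card_onto (inj_col j Xj) (leqnn _) s.
  by move: (none i); rewrite -si eqxx.
have -> : [set i | s \in [set f i j | j in X]] = row_of @: X.
  apply/setP=> i; rewrite inE; apply/imsetP/imsetP=> -[j Xj eq_i]; exists j => //.
    by apply: (inj_col j Xj); rewrite row_ofP.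
  by rewrite eq_i row_ofP.
rewrite card_in_imset // => j1 j2 X1 X2 eq12; apply: (inj_row (row_of j1)) => //.
by rewrite row_ofP // eq12 row_ofP.
Qed.

Lemma card_sumset (T1 T2 : finType) (S : {set T1 + T2}) :
  #|S| = #|[set x | inl x \in S]| + #|[set y | inr y \in S]|.
Proof.
by rewrite -!sum1_card big_sumType; congr (_ + _); apply: eq_bigl => x; rewrite inE.
Qed.

Lemma degree_fst (T1 T2 : finType) (S : {set T1 * T2}) x :
  degree fst S x = #|[set y | (x, y) \in S]|.
Proof.
have inj : injective (pair x : T2 -> T1 * T2) by move=> y y' [].
rewrite -(card_imset _ inj) /degree; apply: eq_card=> -[a b].
rewrite !inE /=; apply/andP/imsetP=> [[Sab /eqP ax]|[y]]; first by exists b; rewrite ?inE -ax.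
by rewrite inE => Sy [-> ->]; rewrite Sy.
Qed.

Lemma degree_snd (T1 T2 : finType) (S : {set T1 * T2}) y :
  degree snd S y = #|[set x | (x, y) \in S]|.
Proof.
have inj : injective (pair^~ y : T1 -> T1 * T2) by move=> x x' [].
rewrite -(card_imset _ inj) /degree; apply: eq_card=> -[a b].
rewrite !inE /=; apply/andP/imsetP=> [[Sab /eqP yb]|[x]]; first by exists a; rewrite ?inE -yb.
by rewrite inE => Sx [-> ->]; rewrite Sx.
Qed.

Lemma adjacent_pair_fst (T1 T2 : finType) (x : T1) (y y' : T2) :
  y != y' -> adjacent fst snd (x, y) (x, y').
Proof. by move=> ne; rewrite /adjacent xpair_eqE eqxx ne. Qed.

Lemma adjacent_pair_snd (T1 T2 : finType) (x x' : T1) (y : T2) :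
  x != x' -> adjacent fst snd (x, y) (x', y).
Proof. by move=> ne; rewrite /adjacent xpair_eqE /= (negbTE ne) eqxx orbT. Qed.

Section Completion.
Variables (n : nat) (P : parray n) (r1 r2 c1 c2 c3 : 'I_n).
Hypothesis n_ge8 : 8 <= n.
Hypothesis P_latin : is_partial_latin P.
Hypotheses (r12 : r1 != r2) (c12 : c1 != c2) (c13 : c1 != c3) (c23 : c2 != c3).
Hypothesis P_filled : forall i j,
  (P i j != None) = [|| i == r1, i == r2, j == c1, j == c2 | j == c3].
Hypothesis block_card :
  #|[set s | [exists i in [:: r1; r2], exists j in [:: c1; c2; c3], P i j == Some s]]| = 3.

(* Locked, so that [inE] leaves memberships in [Rows] and [Cols] folded. *)
Fact Rows_key : unit. Proof. by []. Qed.
Definition Rows : {set 'I_n} := locked_with Rows_key [set r1; r2].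
Fact Cols_key : unit. Proof. by []. Qed.
Definition Cols : {set 'I_n} := locked_with Cols_key [set c1; c2; c3].

Definition filled i j := (i \in Rows) || (j \in Cols).
Definition entry i j := odflt r1 (P i j).
Definition Csyms i := [set entry i j | j in Cols].
Definition Rsyms j := [set entry i j | i in Rows].
Definition block := Csyms r1.

Lemma inRows i : (i \in Rows) = (i == r1) || (i == r2).
Proof. by rewrite /Rows locked_withE !inE. Qed.

Lemma inCols j : (j \in Cols) = [|| j == c1, j == c2 | j == c3].
Proof. by rewrite /Cols locked_withE !inE orbA. Qed.

Lemma card_Rows : #|Rows| = 2.
Proof. by rewrite /Rows locked_withE cards2 r12. Qed.

Lemma card_Cols : #|Cols| = 3.
Proof. by rewrite /Cols locked_withE -setUA cardsU1 cards2 !inE negb_or c12 c13 c23. Qed.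

Lemma card_free_rows : #|~: Rows| = n - 2.
Proof. by have := cardsC Rows; rewrite card_Rows card_ord; lia. Qed.

Lemma card_free_cols : #|~: Cols| = n - 3.
Proof. by have := cardsC Cols; rewrite card_Cols card_ord; lia. Qed.

Lemma P_filled_filled i j : (P i j != None) = filled i j.
Proof. by rewrite P_filled /filled inRows inCols !orbA. Qed.

Lemma P_entry i j : filled i j -> P i j = Some (entry i j).
Proof. by rewrite -P_filled_filled /entry; case: (P i j). Qed.

Lemma filled_Rows i j : i \in Rows -> filled i j.
Proof. by rewrite /filled => ->. Qed.

Lemma filled_Cols i j : j \in Cols -> filled i j.
Proof. by rewrite /filled orbC => ->. Qed.

Lemma entry_injl i j1 j2 :
  filled i j1 -> filled i j2 -> entry i j1 = entry i j2 -> j1 = j2.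
Proof. by move=> /P_entry P1 /P_entry P2 e12; apply: P_latin.1 P1 _; rewrite P2 e12. Qed.

Lemma entry_injr i1 i2 j :
  filled i1 j -> filled i2 j -> entry i1 j = entry i2 j -> i1 = i2.
Proof. by move=> /P_entry P1 /P_entry P2 e12; apply: P_latin.2 P1 _; rewrite P2 e12. Qed.

Lemma card_Csyms i : #|Csyms i| = 3.
Proof.
rewrite card_in_imset ?card_Cols // => j1 j2 C1 C2.
by apply: entry_injl; apply: filled_Cols.
Qed.

Lemma card_Rsyms j : #|Rsyms j| = 2.
Proof.
rewrite card_in_imset ?card_Rows // => i1 i2 R1 R2.
by apply: entry_injr; apply: filled_Rows.
Qed.

Lemma card_non_block : #|~: block| = n - 3.
Proof. by have := cardsC block; rewrite card_Csyms card_ord; lia. Qed.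

Lemma Csyms_Rows i : i \in Rows -> Csyms i = block.
Proof.
pose S0 := [set s | [exists i in [:: r1; r2], exists j in [:: c1; c2; c3], P i j == Some s]].
suff CS0 r : r \in Rows -> Csyms r = S0 by move=> Ri; rewrite /block !CS0 // inRows eqxx.
move=> Rr; apply/eqP; rewrite eqEcard card_Csyms /S0 block_card leqnn andbT.
apply/subsetP=> _ /imsetP[j Cj ->]; rewrite inE; apply/exists_inP; exists r.
  by move: Rr; rewrite inRows !inE.
apply/exists_inP; exists j; first by move: Cj; rewrite inCols !inE.
by rewrite P_entry ?filled_Cols.
Qed.

Lemma card_rows_with s : #|[set i | s \in Csyms i]| = 3.
Proof.
rewrite card_rows_containing ?card_Cols // => [j Cj i1 i2|i j1 j2 C1 C2].
  by apply: entry_injr; apply: filled_Cols.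
by apply: entry_injl; apply: filled_Cols.
Qed.

Lemma card_cols_with s : #|[set j | s \in Rsyms j]| = 2.
Proof.
rewrite (card_rows_containing (f := fun j i => entry i j)) ?card_Rows //.
  by move=> i Ri j1 j2; apply: entry_injl; apply: filled_Rows.
by move=> j i1 i2 R1 R2; apply: entry_injr; apply: filled_Rows.
Qed.

Lemma Rsyms_notin_block j s : j \notin Cols -> s \in Rsyms j -> s \notin block.
Proof.
move=> Cj /imsetP[i Ri ->]; rewrite -(Csyms_Rows Ri); apply/imsetP=> -[j' Cj' e].
by move: Cj; rewrite (entry_injl _ _ e) ?filled_Rows ?Cj'.
Qed.

Lemma Csyms_notin_block s i : s \notin block -> s \in Csyms i -> i \notin Rows.
Proof. by move=> Bs Cs; apply: contra Bs => Ri; rewrite -(Csyms_Rows Ri). Qed.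

Lemma completable_of_free_fill (fill : 'I_n -> 'I_n -> 'I_n) :
  (forall i j, i \notin Rows -> j \notin Cols -> fill i j \notin Csyms i) ->
  (forall i j, i \notin Rows -> j \notin Cols -> fill i j \notin Rsyms j) ->
  (forall i, i \notin Rows -> {in ~: Cols &, injective (fill i)}) ->
  (forall j, j \notin Cols -> {in ~: Rows &, injective (fill^~ j)}) ->
  completable P.
Proof.
move=> fillC fillR fill_row fill_col.
pose L i j := if filled i j then entry i j else fill i j.
have L_row i : injective (L i).
  have [Ri|Ri] := boolP (i \in Rows).
    by move=> j1 j2; rewrite /L !filled_Rows //; apply: entry_injl; apply: filled_Rows.
  move=> j1 j2; rewrite /L /filled (negbTE Ri) /= => e12.
  apply: (injective_glue (Z := ~: Cols) (N := Csyms i)) e12; rewrite ?setUCr ?in_setT //.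
  - by move=> j j' Cj Cj'; apply: entry_injl; apply: filled_Cols.
  - by move=> j Cj; apply: imset_f.
  - exact: fill_row.
  - by move=> j; rewrite in_setC => Cj; apply: fillC.
have L_col j : injective (L^~ j).
  have [Cj|Cj] := boolP (j \in Cols).
    by move=> i1 i2; rewrite /L !filled_Cols //; apply: entry_injr; apply: filled_Cols.
  move=> i1 i2; rewrite /L /filled (negbTE Cj) !orbF => e12.
  apply: (injective_glue (Z := ~: Rows) (N := Rsyms j)) e12; rewrite ?setUCr ?in_setT //.
  - by move=> i i' Ri Ri'; apply: entry_injr; apply: filled_Rows.
  - by move=> i Ri; apply: (imset_f (fun i => entry i j)).
  - exact: fill_col j Cj.
  - by move=> i; rewrite in_setC => Ri; apply: fillR.
exists L; split; first by split=> [i j1 j2 s [<-] [/L_row]|i1 i2 j s [<-] [/L_col]].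
move=> i j s Pij; have fij : filled i j by rewrite -P_filled_filled Pij.
by rewrite /L fij /entry Pij.
Qed.

(* Edge [(s, j)] stands for outer symbol [s] in free column [j]; its colour will be the
   row receiving [s] there. *)
Definition outer_edges : {set 'I_n * 'I_n} :=
  [set e | [&& e.1 \notin block, e.2 \notin Cols & e.1 \notin Rsyms e.2]].

Definition outer_list (e : 'I_n * 'I_n) := [set i | (i \notin Rows) && (e.1 \notin Csyms i)].

Lemma outer_edgesP s j :
  (s, j) \in outer_edges -> [/\ s \notin block, j \notin Cols & s \notin Rsyms j].
Proof. by rewrite inE => /and3P. Qed.

Lemma outer_edges_regular : regular fst snd outer_edges (~: block) (~: Cols) (n - 5).
Proof.
split=> [e|s /[!in_setC] Bs|j /[!in_setC] Cj]; first by rewrite !inE => /and3P[-> -> _].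
- rewrite degree_fst.
  have -> : [set j | (s, j) \in outer_edges] = ~: Cols :\: [set j | s \in Rsyms j].
    by apply/setP=> j; rewrite !inE /= Bs /= andbC.
  rewrite cardsDS ?card_free_cols ?card_cols_with -?subnDA //.
  apply/subsetP=> j; rewrite in_setC in_set => /imsetP[i Ri sij]; apply: contra Bs => Cj.
  by rewrite sij -(Csyms_Rows Ri) imset_f.
- rewrite degree_snd.
  have -> : [set s | (s, j) \in outer_edges] = ~: block :\: Rsyms j.
    by apply/setP=> s; rewrite !inE /= Cj /= andbC.
  rewrite cardsDS ?card_non_block ?card_Rsyms -?subnDA //.
  by apply/subsetP=> s /(Rsyms_notin_block Cj); rewrite inE.
Qed.

Lemma card_outer_list e : e.1 \notin block -> #|outer_list e| = n - 5.
Proof.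
move=> Be; have -> : outer_list e = ~: Rows :\: [set i | e.1 \in Csyms i].
  by apply/setP=> i; rewrite !inE andbC.
rewrite cardsDS ?card_free_rows ?card_rows_with -?subnDA //.
by apply/subsetP=> i; rewrite in_setC in_set; exact: Csyms_notin_block.
Qed.

Definition block_cells : {set 'I_n * 'I_n} :=
  [set p | [&& p.1 \notin Rows, p.2 \in block & p.2 \in Csyms p.1]].

Lemma card_free_rows_with x :
  x \in block -> #|[set i | (i \notin Rows) && (x \in Csyms i)]| = 1.
Proof.
move=> Bx; have -> : [set i | (i \notin Rows) && (x \in Csyms i)] =
                     [set i | x \in Csyms i] :\: Rows by apply/setP=> i; rewrite !inE.
rewrite cardsDS ?card_rows_with ?card_Rows //.
by apply/subsetP=> i Ri; rewrite inE (Csyms_Rows Ri).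
Qed.

Lemma block_cells_inj : {in block_cells &, injective snd}.
Proof.
move=> [i x] [i' x']; rewrite !inE /= => /and3P[Ri Bx Cx] /and3P[Ri' _ Cx'] exx'.
subst x'; congr (_, _).
have /eqP/cards1P[i0 free_x] := card_free_rows_with Bx.
have : i \in [set i0] by rewrite -free_x inE Ri Cx.
have : i' \in [set i0] by rewrite -free_x inE Ri' Cx'.
by rewrite !inE => /eqP-> /eqP->.
Qed.

Lemma card_block_cells : #|block_cells| = 3.
Proof.
rewrite -(card_in_imset block_cells_inj) -(card_Csyms r1); apply: eq_card => x.
apply/imsetP/idP=> [[p /[!inE] /and3P[_ Bx _] ->//]|Bx].
have /eqP/cards1P[i free_x] := card_free_rows_with Bx.
have : i \in [set i0 | (i0 \notin Rows) && (x \in Csyms i0)] by rewrite free_x set11.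
by rewrite inE => /andP[Ri Cx]; exists (i, x); rewrite // inE Ri Bx Cx.
Qed.

Section OuterSymbols.
Variable place : 'I_n * 'I_n -> 'I_n.
Hypothesis place_list : {in outer_edges, forall e, place e \in outer_list e}.
Hypothesis place_proper : proper_colouring fst snd outer_edges place.

Definition outer_fill i j := [pick s | ((s, j) \in outer_edges) && (place (s, j) == i)].

Lemma outer_fillE i j s :
  (outer_fill i j == Some s) = ((s, j) \in outer_edges) && (place (s, j) == i).
Proof.
rewrite /outer_fill; case: pickP => [s' /andP[D' /eqP c']|none]; last by rewrite none.
apply/eqP/andP=> [[<-]|[D /eqP c]]; first by rewrite D' c'.
have [-> //|ne] := eqVneq s' s.
by have := place_proper D' D (adjacent_pair_snd _ ne); rewrite c c' eqxx.
Qed.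

Lemma outer_fillP i j s : outer_fill i j = Some s ->
  [/\ (s, j) \in outer_edges, place (s, j) = i, i \notin Rows & s \notin Csyms i].
Proof.
move/eqP; rewrite outer_fillE => /andP[D /eqP <-].
by have := place_list D; rewrite inE => /andP[-> ->].
Qed.

Lemma outer_fill_notin_block i j s : outer_fill i j = Some s -> s \notin block.
Proof. by case/outer_fillP=> /outer_edgesP[]. Qed.

Lemma outer_fill_inj i j i' j' s :
  outer_fill i j = Some s -> outer_fill i' j' = Some s -> (i == i') || (j == j') ->
  (i, j) = (i', j').
Proof.
move=> /outer_fillP[D pl _ _] /outer_fillP[D' pl' _ _] shared; rewrite -pl -pl' in shared *.
have [<- // | ne] := eqVneq j j'; move: shared; rewrite (negbTE ne) orbF.
by rewrite (negbTE (place_proper D D' (adjacent_pair_fst _ ne))).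
Qed.

Lemma outer_fill_row_onto i s : i \notin Rows -> s \notin block -> s \notin Csyms i ->
  exists j, outer_fill i j = Some s.
Proof.
move=> Ri Bs Cs; pose N := [set e in outer_edges | e.1 == s].
have inj : {in N &, injective place}.
  move=> e e' /setIdP[D /eqP es] /setIdP[D' /eqP es'] eq_pl; have [// | ne] := eqVneq e e'.
  have adj : adjacent fst snd e e' by rewrite /adjacent ne es es' eqxx.
  by have := place_proper D D' adj; rewrite eq_pl eqxx.
have onto : place @: N = outer_list (s, s).
  have [_ degN _] := outer_edges_regular.
  apply/eqP; rewrite eqEcard card_in_imset // card_outer_list // [#|N|]degN ?inE //.
  rewrite leqnn andbT; apply/subsetP=> _ /imsetP[e /setIdP[D /eqP es] ->].
  by have := place_list D; rewrite /outer_list es.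
have : i \in outer_list (s, s) by rewrite inE Ri Cs.
rewrite -onto => /imsetP[[s' j] /setIdP[D /eqP /= es] ->]; exists j.
by apply/eqP; rewrite outer_fillE -es D eqxx.
Qed.

Lemma card_outer_fill_row i : i \notin Rows ->
  #|[set j | (j \notin Cols) && (outer_fill i j != None)]| = #|~: block :\: Csyms i|.
Proof.
move=> Ri; pose sym j := odflt r1 (outer_fill i j).
have symP j : outer_fill i j != None -> outer_fill i j = Some (sym j).
  by rewrite /sym; case: (outer_fill i j).
have inj : {in [set j | (j \notin Cols) && (outer_fill i j != None)] &, injective sym}.
  move=> j1 j2 /[!inE] /andP[_ /symP D1] /andP[_ /symP D2] eq12.
  rewrite eq12 in D1; have := outer_fill_inj D1 D2.
  by rewrite eqxx => /(_ isT) [].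
rewrite -(card_in_imset inj); apply: eq_card => s; rewrite !inE.
apply/imsetP/andP=> [[j /[!inE] /andP[_ /symP D] ->]|[Cs Bs]].
  by have [/outer_edgesP[-> _ _] _ _ ->] := outer_fillP D.
have [j D] := outer_fill_row_onto Ri Bs Cs; exists j; last by rewrite /sym D.
by have [/outer_edgesP[_ Cj _] _ _ _] := outer_fillP D; rewrite in_set Cj D.
Qed.

Lemma card_outer_fill_col j : j \notin Cols ->
  #|[set i | (i \notin Rows) && (outer_fill i j != None)]| = n - 5.
Proof.
move=> Cj; pose sym i := odflt r1 (outer_fill i j).
have symP i : outer_fill i j != None -> outer_fill i j = Some (sym i).
  by rewrite /sym; case: (outer_fill i j).
have [_ _ deg] := outer_edges_regular; rewrite -(deg j) ?in_setC // degree_snd.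
have inj : {in [set i | (i \notin Rows) && (outer_fill i j != None)] &, injective sym}.
  move=> i1 i2 /[!inE] /andP[_ /symP D1] /andP[_ /symP D2] eq12.
  rewrite eq12 in D1; have := outer_fill_inj D1 D2.
  by rewrite eqxx orbT => /(_ isT) [].
rewrite -(card_in_imset inj); apply: eq_card => s; rewrite [in RHS]in_set.
apply/imsetP/idP=> [[i Si ->]|D].
  by move: Si; rewrite in_set => /andP[_ /symP /outer_fillP[]].
have /eqP D' : outer_fill (place (s, j)) j == Some s by rewrite outer_fillE D eqxx.
exists (place (s, j)); last by rewrite /sym D'.
by have [_ _ Ri _] := outer_fillP D'; rewrite in_set Ri D'.
Qed.

Definition holes : {set 'I_n * 'I_n} :=
  [set p | [&& p.1 \notin Rows, p.2 \notin Cols & outer_fill p.1 p.2 == None]].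

Lemma in_holes i j : i \notin Rows -> j \notin Cols -> outer_fill i j = None -> (i, j) \in holes.
Proof. by move=> Ri Cj D; rewrite inE Ri Cj D. Qed.

Lemma degree_holes_row i : i \notin Rows -> degree fst holes i = 3 - #|Csyms i :&: block|.
Proof.
move=> Ri; rewrite degree_fst.
have -> : [set j | (i, j) \in holes] =
          ~: Cols :\: [set j | (j \notin Cols) && (outer_fill i j != None)].
  by apply/setP=> j; rewrite !inE /= Ri; case: (j \in Cols); case: (outer_fill i j).
rewrite cardsDS; last by apply/subsetP=> j; rewrite !inE => /andP[].
rewrite card_outer_fill_row // card_free_cols cardsD card_non_block setIC -setDE.
by have := cardsID block (Csyms i); rewrite card_Csyms; move: n_ge8; lia.
Qed.

Lemma degree_holes_col j : j \notin Cols -> degree snd holes j = 3.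
Proof.
move=> Cj; rewrite degree_snd.
have -> : [set i | (i, j) \in holes] =
          ~: Rows :\: [set i | (i \notin Rows) && (outer_fill i j != None)].
  by apply/setP=> i; rewrite !inE /= Cj; case: (i \in Rows); case: (outer_fill i j).
rewrite cardsDS; last by apply/subsetP=> i; rewrite !inE => /andP[].
by rewrite card_outer_fill_col // card_free_rows; move: n_ge8; lia.
Qed.

(* The block symbols are placed by a 3-edge-colouring of a bipartite multigraph between
   the rows and the free columns together with an extra vertex [None]: every hole [(i, j)]
   joins [i] to [Some j], and every block cell [(i, x)] joins [i] to [None]. The three
   [None]-edges get the three colours, and each hole receives the block symbol of its
   colour. *)
Definition block_edge := ('I_n * 'I_n + 'I_n * 'I_n)%type.
Definition block_edge_row (e : block_edge) := match e with inl p | inr p => p.1 end.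
Definition block_edge_col (e : block_edge) := if e is inl p then Some p.2 else None.
Definition block_edges : {set block_edge} :=
  [set e | match e with inl p => p \in holes | inr p => p \in block_cells end].
Definition block_edge_cols : {set option 'I_n} :=
  [set o | if o is Some j then j \notin Cols else true].

Lemma inl_block_edges p : p \in holes -> inl p \in block_edges.
Proof. by move=> hp; rewrite in_set. Qed.

Lemma inr_block_edges p : p \in block_cells -> inr p \in block_edges.
Proof. by move=> hp; rewrite in_set. Qed.

Lemma degree_block_cells i :
  i \notin Rows -> degree fst block_cells i = #|Csyms i :&: block|.
Proof. by move=> Ri; rewrite degree_fst; apply: eq_card => x; rewrite !inE /= Ri /= andbC. Qed.

Lemma block_edges_regular :
  regular block_edge_row block_edge_col block_edges (~: Rows) block_edge_cols 3.
Proof.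
split=> [[[i j]|[i x]]|i /[!in_setC] Ri|[j|] /[!inE]]; rewrite ?inE /=.
- by case/and3P=> -> ->.
- by case/and3P=> ->.
- have -> : degree block_edge_row block_edges i =
            degree fst holes i + degree fst block_cells i.
    by rewrite /degree card_sumset; congr (_ + _); apply: eq_card => p; rewrite !inE.
  rewrite degree_holes_row // degree_block_cells // subnK //.
  by rewrite -(card_Csyms i) subset_leq_card ?subsetIl.
- move=> Cj; rewrite -(degree_holes_col Cj) /degree card_sumset.
  have -> : [set y | inr y \in [set e in block_edges | block_edge_col e == Some j]] = set0.
    by apply/setP=> y; rewrite !inE andbF.
  suff -> : [set x | inl x \in [set e in block_edges | block_edge_col e == Some j]] =
            [set e in holes | e.2 == j] by rewrite cards0 addn0.
  by apply/setP=> p; rewrite !inE.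
- rewrite -card_block_cells /degree card_sumset.
  have -> : [set x | inl x \in [set e in block_edges | block_edge_col e == None]] = set0.
    by apply/setP=> x; rewrite !inE andbF.
  suff -> : [set y | inr y \in [set e in block_edges | block_edge_col e == None]] =
            block_cells by rewrite cards0 add0n.
  by apply/setP=> p; rewrite !inE andbT.
Qed.

Section BlockSymbols.
Variable colour : block_edge -> nat.
Hypothesis colour_lt : {in block_edges, forall e, colour e < 3}.
Hypothesis colour_proper :
  proper_colouring block_edge_row block_edge_col block_edges colour.

Lemma block_cells_colour_inj : {in block_cells &, injective (fun p => colour (inr p))}.
Proof.
move=> p p' Bp Bp' eq_c; have [// | ne] := eqVneq p p'.
have adj : adjacent block_edge_row block_edge_col (inr p) (inr p').
  by rewrite /adjacent /= eqxx orbT andbT; apply: contra ne => /eqP[->].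
by have := colour_proper (inr_block_edges Bp) (inr_block_edges Bp') adj; rewrite eq_c eqxx.
Qed.

Lemma block_cells_colour_onto k : k < 3 -> exists2 p, p \in block_cells & colour (inr p) = k.
Proof.
move=> lt_k3; pose g p : 'I_3 := inord (colour (inr p)).
have lt_c p : p \in block_cells -> colour (inr p) < 3 by move/inr_block_edges/colour_lt.
have inj : {in block_cells &, injective g}.
  move=> p p' Bp Bp' /(congr1 val); rewrite /= !inordK ?lt_c //.
  exact: block_cells_colour_inj.
have : inord k \in g @: block_cells.
  suff -> : g @: block_cells = setT by rewrite inE.
  apply/eqP; rewrite eqEcard subsetT cardsT card_ord (card_in_imset inj) card_block_cells.
  by [].
by case/imsetP=> p Bp /(congr1 val); rewrite /= !inordK ?lt_c // => ->; exists p.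
Qed.

Definition block_fill i j :=
  if [pick p in block_cells | colour (inr p) == colour (inl (i, j))] is Some p
  then p.2 else r1.

Lemma block_fillP i j : (i, j) \in holes ->
  exists2 p, p \in block_cells & colour (inr p) = colour (inl (i, j)) /\ block_fill i j = p.2.
Proof.
move=> Hh; rewrite /block_fill; case: pickP => [p /andP[Bp /eqP eq_c]|none].
  by exists p.
have [p Bp eq_c] := block_cells_colour_onto (colour_lt (inl_block_edges Hh)).
by move: (none p); rewrite Bp eq_c eqxx.
Qed.

Lemma block_fill_in_block i j : (i, j) \in holes -> block_fill i j \in block.
Proof. by move=> Hh; have [p /[!inE] /and3P[_ Bp _] [_ ->]] := block_fillP Hh. Qed.

Lemma block_fill_inj i j i' j' :
  (i, j) \in holes -> (i', j') \in holes ->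
  block_fill i j = block_fill i' j' -> (i == i') || (j == j') -> (i, j) = (i', j').
Proof.
move=> Hh Hh'; have [p Bp [cp ->]] := block_fillP Hh; have [p' Bp' [cp' ->]] := block_fillP Hh'.
move=> /(block_cells_inj Bp Bp') epp' shared.
have [// | ne] := eqVneq (i, j) (i', j').
have adj : adjacent block_edge_row block_edge_col (inl (i, j)) (inl (i', j')).
  by rewrite /adjacent /= shared andbT; apply: contra ne => /eqP[-> ->].
have := colour_proper (inl_block_edges Hh) (inl_block_edges Hh') adj.
by rewrite -cp -cp' epp' eqxx.
Qed.

Definition fill i j := if outer_fill i j is Some s then s else block_fill i j.

Lemma fill_notin_Csyms i j : i \notin Rows -> j \notin Cols -> fill i j \notin Csyms i.
Proof.
rewrite /fill; case D: (outer_fill i j) => [s|] Ri Cj; first by have [] := outer_fillP D.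
have Hh := in_holes Ri Cj D; have [[i' x] Bp [cp ->]] := block_fillP Hh.
apply/negP=> /= Cx; have Bix : (i, x) \in block_cells.
  by move: Bp; rewrite !inE Ri Cx => /and3P[_ -> _].
move: cp; rewrite (block_cells_inj Bp Bix erefl) => cp.
have adj : adjacent block_edge_row block_edge_col (inl (i, j)) (inr (i, x)).
  by rewrite /adjacent /= eqxx.
by have := colour_proper (inl_block_edges Hh) (inr_block_edges Bix) adj; rewrite cp eqxx.
Qed.

Lemma fill_notin_Rsyms i j : i \notin Rows -> j \notin Cols -> fill i j \notin Rsyms j.
Proof.
rewrite /fill; case D: (outer_fill i j) => [s|] Ri Cj.
  by have [/outer_edgesP[]] := outer_fillP D.
apply: contraL (block_fill_in_block (in_holes Ri Cj D)).
exact: Rsyms_notin_block.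
Qed.

Lemma fill_inj i j i' j' :
  i \notin Rows -> j \notin Cols -> i' \notin Rows -> j' \notin Cols ->
  fill i j = fill i' j' -> (i == i') || (j == j') -> (i, j) = (i', j').
Proof.
move=> Ri Cj Ri' Cj'; rewrite /fill.
case D: (outer_fill i j) => [s|]; case D': (outer_fill i' j') => [s'|].
- by move=> ess'; apply: outer_fill_inj D _; rewrite D' ess'.
- move=> e; have := outer_fill_notin_block D.
  by rewrite e block_fill_in_block ?in_holes.
- move=> e; have := outer_fill_notin_block D'.
  by rewrite -e block_fill_in_block ?in_holes.
- exact: block_fill_inj (in_holes Ri Cj D) (in_holes Ri' Cj' D').
Qed.

Lemma completable_of_colourings : completable P.
Proof.
apply: (completable_of_free_fill (fill := fill)).
- exact: fill_notin_Csyms.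
- exact: fill_notin_Rsyms.
- move=> i Ri j j' /[!in_setC] Cj Cj' /(fill_inj Ri Cj Ri Cj').
  by rewrite eqxx => /(_ isT) [].
- move=> j Cj i i' /[!in_setC] Ri Ri' /(fill_inj Ri Cj Ri' Cj).
  by rewrite eqxx orbT => /(_ isT) [].
Qed.

End BlockSymbols.

End OuterSymbols.

Theorem completable_two_rows_three_cols : completable P.
Proof.
have [place [place_list place_proper]] : exists place : 'I_n * 'I_n -> 'I_n,
    {in outer_edges, forall e, place e \in outer_list e} /\
    proper_colouring fst snd outer_edges place.
  apply: (Galvin_list_edge_colouring r1 r1 outer_edges_regular) => -[s j].
  by case/outer_edgesP=> Bs _ _; rewrite card_outer_list.
have [colour [colour_lt colour_proper]] :=
  Konig_edge_colouring None (block_edges_regular place_list place_proper).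
exact: completable_of_colourings colour_lt colour_proper.
Qed.

End Completion.

Theorem corollary1 (n : nat) (P : 'I_n -> 'I_n -> option 'I_n)
  (r1 r2 c1 c2 c3 : 'I_n) :
  8 <= n ->
  is_partial_latin P ->
  r1 != r2 -> c1 != c2 -> c1 != c3 -> c2 != c3 ->
  (* exactly the two rows and three columns are filled *)
  (forall i j,
     (P i j != None) = [|| i == r1, i == r2, j == c1, j == c2 | j == c3]) ->
  (* the 2x3 intersection subarray contains exactly three distinct symbols *)
  #|[set s | [exists i in [:: r1; r2], exists j in [:: c1; c2; c3],
                P i j == Some s]]| = 3 ->
  completable P.
Proof. exact: completable_two_rows_three_cols. Qed.
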